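(* Let $n\geq4$, $D_n=\{x\in\mathbb{Z}^n:\sum_i x_i\equiv0\bmod2\}$, $\mathcal{P}$ its Voronoi region with vertex set $V_{\mathcal{P}}$, and $D_n^\#$ the dual lattice. Let $\tilde G$ be the Cayley graph on $\frac12D_n^\#$ with generating set $\frac12V_{\mathcal{P}}$. Then every clique $C$ of $\tilde G$ satisfies $\delta^0(C)=\frac{|C|}{|N[C]|}\leq\frac{1}{(3/4)2^n+n-1}$.
   Context: The Voronoi region of a lattice $\Lambda\subset\mathbb{R}^n$ is $\{z:\langle z-x,z-x\rangle\geq\langle z,z\rangle\ \forall x\in\Lambda\}$; $D_n^\#=\{y:\langle x,y\rangle\in\mathbb{Z}\ \forall x\in D_n\}$. It is known that $V_{\mathcal{P}}$ consists of the $2n$ vectors $\pm e_i$ and the $2^n$ vectors $(\pm\frac12,\dots,\pm\frac12)$. In the Cayley graph, $x,y$ are adjacent iff $x-y\in\frac12V_{\mathcal{P}}$. A clique is a set of vertices any two distinct elements of which are adjacent; $N[C]=C+(\{0\}\cup\frac12V_{\mathcal{P}})$ is its closed neighborhood. *)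

From HB Require Import structures.
From mathcomp Require Import all_boot all_order all_algebra.
From mathcomp Require Import finmap.
Set Implicit Arguments. Unset Strict Implicit. Unset Printing Implicit Defensive.
Import Order.TTheory GRing.Theory Num.Theory.
Local Open Scope ring_scope.

Definition dotp (n : nat) (x y : 'rV[rat]_n) : rat := \sum_(i < n) x 0 i * y 0 i.

Definition intvec (n : nat) (x : 'rV[rat]_n) : Prop := forall i, x 0 i \is a Num.int.

Definition Dn (n : nat) (x : 'rV[rat]_n) : Prop :=
  intvec x /\ (\sum_(i < n) x 0 i) / 2 \is a Num.int.

Definition Dn_dual (n : nat) (y : 'rV[rat]_n) : Prop :=
  forall x, Dn x -> dotp x y \is a Num.int.

Definition voronoi_Dn (n : nat) (z : 'rV[rat]_n) : Prop :=
  forall x, Dn x -> dotp (z - x) (z - x) >= dotp z z.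

(* V_P: the 2n vectors +-e_i and the 2^n vectors (+-1/2,...,+-1/2)
   (the known vertex set of the Voronoi region of D_n). *)
Definition VP (n : nat) : seq 'rV[rat]_n :=
  [seq delta_mx 0 i | i <- enum 'I_n] ++ [seq - delta_mx 0 i | i <- enum 'I_n] ++
  [seq \row_(i < n) (if s i then 1 / 2 else - (1 / 2)) | s : {ffun 'I_n -> bool} <- enum {ffun 'I_n -> bool}].

Definition vertex (n : nat) (v : 'rV[rat]_n) : Prop := Dn_dual (2 *: v).

Definition halfVP (n : nat) : seq 'rV[rat]_n := [seq (1 / 2) *: v | v <- VP n].

Definition adjacent (n : nat) (x y : 'rV[rat]_n) : Prop := x - y \in halfVP n.

Local Open Scope fset_scope.

Definition clique (n : nat) (C : {fset 'rV[rat]_n}) : Prop :=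
  (forall x, x \in C -> vertex x) /\
  (forall x y, x \in C -> y \in C -> x != y -> adjacent x y).

Definition closed_nbhd (n : nat) (C : {fset 'rV[rat]_n}) : {fset 'rV[rat]_n} :=
  [fset (c + v)%R | c in C, v in ((0 : 'rV[rat]_n) :: halfVP n)].

Definition delta0 (n : nat) (C : {fset 'rV[rat]_n}) : rat :=
  (#|` C|)%:R / (#|` closed_nbhd C|)%:R.

(** Every point [c] of the clique [C] is given a set of private neighbours
    [c + v], [v] in (1/2)V_P, so that private neighbours of distinct points
    of [C] never coincide; counting them yields
    |N[C]| >= |C| (3 2^(n-2) + n - 1).  Write (1/2)V_P as the axial vectors
    +-e_i/2 and the quarter vectors q_s = (+-1/4, ..., +-1/4).  Differences of
    points of [C] lie in (1/2)V_P; comparing coordinates, [c] has at most one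
    axial neighbour in [C], and any two quarter neighbours of [c] in [C] differ
    in exactly one sign.  The quarter neighbour c + q_s is private unless
    c + s_k e_k/2 lies in [C] and s_(k+1) <> s_k, which excludes a quarter of
    the 2^n sign vectors.  The axial neighbour c + b e_i/2 is private unless
    c + q_t lies in [C] for some t with t_i = b, which excludes both signs
    only on the (at most one) axis along which two such t differ. *)

From mathcomp Require Import all_boot all_order all_algebra.
From mathcomp Require Import finmap zify lra.
Import Order.TTheory GRing.Theory Num.Theory.
Local Open Scope ring_scope.

Lemma ordS_neq {n} (k : 'I_n) : (1 < n)%N -> ordS k != k.
Proof.
move=> n_gt1; apply/eqP => /(congr1 val) /=; case: k => k /= lt_kn.
have [/eqP kS_n | kS_neq_n] := boolP (k.+1 == n); last by rewrite modn_small; lia.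
by rewrite kS_n modnn; lia.
Qed.

Lemma exists_ord_neq2 {n} (i k : 'I_n) :
  (2 < n)%N -> exists j : 'I_n, (j != i) && (j != k).
Proof.
move=> n_gt2; have := cardsC [set i; k]; rewrite cards2 card_ord => card_compl.
have /card_gt0P [j] : (0 < #|~: [set i; k]|)%N by case: (i != k) card_compl; lia.
by rewrite !inE negb_or; exists j.
Qed.

Lemma subr_eq_of_addr_eq {V : zmodType} {x x' y y' : V} :
  x + y = x' + y' -> x - x' = y' - y.
Proof. by move=> e; rewrite -(addrK y x) e addrC addrA addKr. Qed.

Lemma eq_addr_subr {V : zmodType} {x x' y y' : V} :
  x + y = x' + y' -> x = x' + (y' - y).
Proof. by move=> e; rewrite addrA -e addrK. Qed.

Lemma ler_div_inv (R : realFieldType) (a b k : R) :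
  0 < k -> 0 <= b -> a * k <= b -> a / b <= 1 / k.
Proof.
move=> k_gt0; rewrite le_eqVlt => /orP [/eqP <- | b_gt0] akb.
  by rewrite invr0 mulr0 divr_ge0 // ltW.
by rewrite ler_pdivrMr // mul1r mulrC ler_pdivlMr // mulrC.
Qed.

Section Toggle.
Context {T : finType}.
Implicit Types (k m : T) (s : {ffun T -> bool}) (P : pred {ffun T -> bool}).

Definition toggle k s : {ffun T -> bool} :=
  [ffun j => if j == k then ~~ s j else s j].

Lemma toggleK k : involutive (toggle k).
Proof. by move=> s; apply/ffunP => j; rewrite !ffunE; case: eqP; rewrite ?negbK. Qed.

Lemma card_toggle_half k P a : (forall s, P (toggle k s) = P s) ->
  (2 * #|[pred s | P s && (s k == a)]| = #|P|)%N.
Proof.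
move=> P_toggle; pose Q := [pred s : {ffun T -> bool} | s k == a].
rewrite -(cardID Q P) mul2n -addnn.
have -> : #|[predI P & Q]| = #|[pred s | P s && (s k == a)]|.
  by apply: eq_card => s; rewrite !inE.
congr addn; rewrite -(card_image (can_inj (toggleK k))); apply: eq_card => s.
rewrite !inE -[s in LHS](toggleK k) (mem_map (can_inj (toggleK k))) mem_enum inE.
by rewrite P_toggle ffunE eqxx andbC; case: (s k); case: (a).
Qed.

Lemma card_ffun_fixed2 k m a b : k != m ->
  (4 * #|[pred s : {ffun T -> bool} | (s k == a) && (s m == b)]| = 2 ^ #|T|)%N.
Proof.
move=> km; rewrite -[4%N]/(2 * 2)%N -mulnA card_toggle_half; last first.
  by move=> s; rewrite ffunE eq_sym (negbTE km).
have := card_toggle_half k predT a (fun=> erefl).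
by rewrite card_ffun card_bool => <-.
Qed.
End Toggle.

Section Labelling.
Variables (T : choiceType) (L : finType).
Local Open Scope fset_scope.

Lemma leq_mul_card_labelled (C N : {fset T}) (ok : T -> pred L)
    (f : T -> L -> T) (k : nat) :
  (forall c, c \in C -> k <= #|ok c|)%N ->
  (forall c l, c \in C -> ok c l -> f c l \in N) ->
  (forall c c' l l', c \in C -> c' \in C -> ok c l -> ok c' l' ->
     f c l = f c' l' -> (c, l) = (c', l')) ->
  (#|` C| * k <= #|` N|)%N.
Proof.
move=> k_le f_in f_inj.
pose D := [pred cl : C * L | ok (val cl.1) cl.2].
pose g (cl : C * L) := f (val cl.1) cl.2.
have g_inj : {in D &, injective g}.
  move=> [c l] [c' l'] okl okl' /(f_inj _ _ _ _ (fsvalP c) (fsvalP c') okl okl').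
  by case=> /val_inj -> ->.
have cardD : #|D| = (\sum_(c : C) #|ok (val c)|)%N.
  rewrite -sum1_card (eq_bigr (fun c => \sum_(l | ok (val c) l) 1)%N) => [|c _].
    by rewrite pair_big_dep.
  by rewrite sum1_card.
apply: (@leq_trans #|D|).
  by rewrite cardD cardfE -sum_nat_const; apply: leq_sum => c _; exact: k_le (fsvalP c).
rewrite cardE -(size_map g); apply: uniq_leq_size.
  by rewrite map_inj_in_uniq ?enum_uniq // => x y; rewrite !mem_enum; exact: g_inj.
by move=> _ /mapP [[c l] okl ->]; rewrite mem_enum in okl; exact: f_in (fsvalP c) okl.
Qed.
End Labelling.

(* A notation rather than a definition, so that the finType structure of the
   sum type is found. *)
Notation label n := ({ffun 'I_n -> bool} + 'I_n * bool)%type.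

Section Generators.
Context {n : nat}.
Implicit Types (i k : 'I_n) (b : bool) (s t : {ffun 'I_n -> bool}).

Definition axial i b : 'rV[rat]_n :=
  \row_j (if j == i then if b then 1 / 2 else - (1 / 2) else 0).

Definition quarter s : 'rV[rat]_n := \row_j (if s j then 1 / 4 else - (1 / 4)).

Lemma mem_halfVP v :
  reflect ((exists i b, v = axial i b) \/ (exists s, v = quarter s)) (v \in halfVP n).
Proof.
have half_e i : (1 / 2) *: delta_mx 0 i = axial i true.
  by apply/rowP => j; rewrite !mxE; case: (j == i); rewrite ?(mulr1, mulr0).
have half_Ne i : (1 / 2) *: - delta_mx 0 i = axial i false.
  by apply/rowP => j; rewrite !mxE; case: (j == i); rewrite ?(mulrN, mulr1, mulr0, oppr0).
have half_sgn s : (1 / 2) *: \row_j (if s j then 1 / 2 else - (1 / 2)) = quarter s.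
  by apply/rowP => j; rewrite !mxE; case: (s j); lra.
apply: (iffP mapP) => [[w]|].
- rewrite !mem_cat => /orP [|/orP []] /mapP [x _ ->] ->.
  + by left; exists x, true.
  + by left; exists x, false.
  + by right; exists x.
- case=> [[i [[|] ->]]|[s ->]].
  + by exists (delta_mx 0 i); rewrite ?half_e // mem_cat map_f ?mem_enum.
  + exists (- delta_mx 0 i); rewrite ?half_Ne //.
    by rewrite !mem_cat; apply/orP; right; apply/orP; left; apply: map_f; rewrite mem_enum.
  + exists (\row_j (if s j then 1 / 2 else - (1 / 2))); rewrite ?half_sgn //.
    by rewrite !mem_cat; apply/orP; right; apply/orP; right; apply: map_f; rewrite mem_enum.
Qed.

Lemma axial_inj i k b e : axial i b = axial k e -> (i, b) = (k, e).
Proof.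
move/rowP/(_ i); rewrite !mxE eqxx.
by case: eqP => [<-|_]; case: b; case: e => ?; try reflexivity; exfalso; lra.
Qed.

Lemma quarter_inj : injective quarter.
Proof.
move=> s t /rowP E; apply/ffunP => j; move/(_ j): E; rewrite !mxE.
by case: (s j); case: (t j) => ?; try reflexivity; exfalso; lra.
Qed.

Lemma quarter_sub_toggle s k : quarter s - quarter (toggle k s) = axial k (s k).
Proof.
by apply/rowP => j; rewrite !mxE ffunE; case: eqP => [->|_]; case: (s _) => /=; lra.
Qed.

Hypothesis n_gt2 : (2 < n)%N.

Lemma axial_neq_quarter i b s : axial i b != quarter s.
Proof.
apply/eqP => /rowP E; have [j /andP [ji _]] := exists_ord_neq2 i i n_gt2.
by move/(_ j): E; rewrite !mxE (negbTE ji); case: (s j); lra.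
Qed.

Lemma axial_sub_axial_notin i k b e : axial i b - axial k e \notin halfVP n.
Proof.
apply/mem_halfVP => -[[l [t /rowP E]]|[s /rowP E]].
- case: (eqVneq k i) E => [-> E|ki E].
    case: (eqVneq l i) E => [-> E|li E].
      by move/(_ i): E; rewrite !mxE eqxx; case: b; case: e; case: t; lra.
    by move/(_ l): E; rewrite !mxE eqxx (negbTE li); case: t; lra.
  case: (eqVneq l i) E => [-> E|li E].
    by move/(_ k): E; rewrite !mxE eqxx (negbTE ki); case: e; lra.
  move/(_ i): E; rewrite !mxE eqxx eq_sym (negbTE ki) eq_sym (negbTE li).
  by case: b; lra.
- have [j /andP [ji jk]] := exists_ord_neq2 i k n_gt2.
  by move/(_ j): E; rewrite !mxE (negbTE ji) (negbTE jk); case: (s j); lra.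
Qed.

Lemma quarter_sub_in_halfVP {s t} :
  quarter s - quarter t \in halfVP n -> exists k, t = toggle k s.
Proof.
case/mem_halfVP => [[k [b /rowP E]]|[u /rowP E]].
- exists k; apply/ffunP => j; move/(_ j): E; rewrite !mxE ffunE.
  by case: eqP => _; case: (s j); case: (t j); case: b => /= ?;
    try reflexivity; exfalso; lra.
- move/(_ (Ordinal (ltnW (ltnW n_gt2)))): E; rewrite !mxE.
  by case: (s _); case: (t _); case: (u _); lra.
Qed.

Lemma axial_sub_quarter_in_halfVP {i b s} : axial i b - quarter s \in halfVP n ->
  exists2 t : {ffun 'I_n -> bool}, t i = b & axial i b - quarter s = quarter t.
Proof.
case/mem_halfVP => [[k [e /rowP E]]|[t E]].
- have [j /andP [ji jk]] := exists_ord_neq2 i k n_gt2.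
  by move/(_ j): E; rewrite !mxE (negbTE ji) (negbTE jk); case: (s j); lra.
- exists t => //; move/rowP/(_ i): E; rewrite !mxE eqxx.
  by case: b; case: (s i); case: (t i); lra.
Qed.

Definition nbr_offset (l : label n) : 'rV[rat]_n :=
  match l with inl s => quarter s | inr (i, b) => axial i b end.

Lemma nbr_offset_in_halfVP l : nbr_offset l \in halfVP n.
Proof.
by apply/mem_halfVP; case: l => [s|[i b]]; [right; exists s | left; exists i, b].
Qed.

Lemma nbr_offset_inj : injective nbr_offset.
Proof.
case=> [s|[i b]] [s'|[i' b']] /= E.
- by move/quarter_inj: E => ->.
- by move: (axial_neq_quarter i' b' s); rewrite E eqxx.
- by move: (axial_neq_quarter i b s'); rewrite E eqxx.
- by case/axial_inj: E => -> ->.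
Qed.
End Generators.

Lemma mem_closed_nbhd n (C : {fset 'rV[rat]_n}) c v :
  c \in C -> v \in halfVP n -> c + v \in closed_nbhd C.
Proof. by move=> cC vV; apply: in_imfset2; rewrite //= in_cons vV orbT. Qed.

Section Clique.
Context {n : nat}.
Variable C : {fset 'rV[rat]_n}.
Hypotheses (n_gt2 : (2 < n)%N) (cliqueC : clique C).
Implicit Types (c : 'rV[rat]_n) (s t : {ffun 'I_n -> bool}) (i k l : 'I_n) (b e : bool).

Lemma clique_translate {c c' v w} : c \in C -> c' \in C -> c != c' ->
  c + v = c' + w -> w - v \in halfVP n.
Proof. by move=> cC c'C cc' /subr_eq_of_addr_eq <-; exact: cliqueC.2. Qed.

Lemma axial_nbr_uniq {c i b k e} :
  c + axial i b \in C -> c + axial k e \in C -> (i, b) = (k, e).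
Proof.
move=> ibC keC.
have [/addrI/axial_inj // | ne] := eqVneq (c + axial i b) (c + axial k e).
move: (clique_translate ibC keC ne (addrAC _ _ _)).
by rewrite (negbTE (axial_sub_axial_notin n_gt2 _ _ _ _)).
Qed.

Lemma quarter_nbrs_agree {c s t i} : c + quarter s \in C -> c + quarter t \in C ->
  s i != t i -> forall j, j != i -> s j = t j.
Proof.
move=> sC tC sti j ji.
have st : c + quarter s != c + quarter t.
  by apply: contra sti => /eqP/addrI/quarter_inj ->.
have [k t_def] := quarter_sub_in_halfVP n_gt2 (clique_translate sC tC st (addrAC _ _ _)).
move: sti; rewrite t_def !ffunE; have [<- _ | _] := eqVneq i k; last by rewrite eqxx.
by rewrite (negbTE ji).
Qed.

(* If c' = c + b e_k/2, a quarter neighbour c + q_s = c' + q_s' of both has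
   s' = toggle k s, so s and s' agree at ordS k but not at k: one of the two
   centres excludes it. *)
Definition good_quarter c s :=
  [forall l, (c + axial l (s l) \in C) ==> (s (ordS l) == s l)].

Definition good_axial c i b := [forall t, (c + quarter t \in C) ==> (t i != b)].

Definition good_label c (l : label n) :=
  match l with inl s => good_quarter c s | inr (i, b) => good_axial c i b end.

Lemma good_quarter_sep {c c' s s'} : c \in C -> c' \in C -> c != c' ->
  good_quarter c s -> good_quarter c' s' -> c + quarter s != c' + quarter s'.
Proof.
move=> cC c'C cc' gs gs'; apply/eqP => E.
have [k s_def] := quarter_sub_in_halfVP n_gt2 (clique_translate cC c'C cc' E).
have s'_def : s' = toggle k s by rewrite s_def toggleK.
have c_def : c = c' + axial k (s' k).
  by rewrite (eq_addr_subr E) s_def quarter_sub_toggle.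
have c'_def : c' = c + axial k (s k).
  by rewrite (eq_addr_subr (esym E)) s'_def quarter_sub_toggle.
move/forallP/(_ k): gs; rewrite -c'_def c'C => /eqP gsk.
move/forallP/(_ k): gs'; rewrite -c_def cC s'_def !ffunE eqxx.
by rewrite (negbTE (ordS_neq k (ltnW n_gt2))) gsk; case: (s k).
Qed.

Lemma good_axial_sep {c c' s i b} : c \in C -> c' \in C -> c != c' ->
  good_axial c' i b -> c + quarter s != c' + axial i b.
Proof.
move=> cC c'C cc' gib; apply/eqP => E.
have [t ti tE] := axial_sub_quarter_in_halfVP n_gt2 (clique_translate cC c'C cc' E).
by move/forallP/(_ t): gib; rewrite -tE -(eq_addr_subr E) cC ti eqxx.
Qed.

Lemma axial_sep {c c' i b k e} : c \in C -> c' \in C -> c != c' ->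
  c + axial i b != c' + axial k e.
Proof.
move=> cC c'C cc'; apply/eqP => /(clique_translate cC c'C cc').
by rewrite (negbTE (axial_sub_axial_notin n_gt2 _ _ _ _)).
Qed.

Lemma good_label_inj c c' (l l' : label n) : c \in C -> c' \in C ->
  good_label c l -> good_label c' l' ->
  c + nbr_offset l = c' + nbr_offset l' -> (c, l) = (c', l').
Proof.
move=> cC c'C gl gl' E; have [cc' | cc'] := eqVneq c c'.
  by subst c'; move/addrI/(nbr_offset_inj n_gt2): E => ->.
exfalso; move/eqP: E gl gl'.
case: l => [s|[i b]]; case: l' => [s'|[i' b']] /= E gl gl'.
- by rewrite (negbTE (good_quarter_sep cC c'C cc' gl gl')) in E.
- by rewrite (negbTE (good_axial_sep cC c'C cc' gl')) in E.
- have c'c : c' != c by rewrite eq_sym.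
  by rewrite eq_sym (negbTE (good_axial_sep c'C cC c'c gl)) in E.
- by rewrite (negbTE (axial_sep cC c'C cc')) in E.
Qed.

Lemma card_good_quarter c : (3 * 2 ^ (n - 2) <= #|[pred s | good_quarter c s]|)%N.
Proof.
have pow2n : (2 ^ n = 4 * 2 ^ (n - 2))%N.
  by rewrite -[in LHS](subnK (ltnW n_gt2)) expnD mulnC.
have card_all : #|{ffun 'I_n -> bool}| = (2 ^ n)%N.
  by rewrite card_ffun card_bool card_ord.
case: (pickP [pred p : 'I_n * bool | c + axial p.1 p.2 \in C]) => [[k e] /= keC|no_axial].
  pose B := [pred s : {ffun 'I_n -> bool} | (s k == e) && (s (ordS k) == ~~ e)].
  have good_B : [pred s | good_quarter c s] =i [predC B].
    move=> s; rewrite !inE; apply/forallP/idP => [/(_ k) | Bs l].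
      case: (eqVneq (s k) e) => [-> | _] //=.
      by rewrite keC /= => /eqP ->; case: (e).
    apply/implyP => lC; case: (axial_nbr_uniq keC lC) => <- ske.
    by rewrite -ske eqxx /= in Bs *; case: (s (ordS k)) Bs; case: (e).
  have kS : k != ordS k by rewrite eq_sym ordS_neq // ltnW.
  have := card_ffun_fixed2 k (ordS k) e (~~ e) kS; rewrite card_ord -/B pow2n.
  have := cardC B; rewrite card_all (eq_card good_B) pow2n.
  by move: #|B| #|[predC B]| (2 ^ (n - 2))%N; lia.
have all_good : [pred s | good_quarter c s] =i predT.
  move=> s; rewrite !inE; apply/forallP => l.
  by have := no_axial (l, s l); rewrite /= => ->.
by rewrite (eq_card all_good) card_all pow2n leq_pmul2r ?expn_gt0.
Qed.

Definition split_axis c i :=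
  [exists s, exists t, [&& c + quarter s \in C, c + quarter t \in C & s i != t i]].

Lemma split_axis_uniq c i j : split_axis c i -> split_axis c j -> i = j.
Proof.
move=> /existsP [s /existsP [t /and3P [sC tC sti]]].
move=> /existsP [s' /existsP [t' /and3P [s'C t'C sti']]].
have agree_s u (uC : c + quarter u \in C) j' : j' != i -> u j' = s j'.
  move=> j'i; have [usi | usi] := eqVneq (u i) (s i).
    rewrite (quarter_nbrs_agree uC tC _ j' j'i) ?usi //.
    by rewrite (quarter_nbrs_agree sC tC sti j' j'i).
  exact: quarter_nbrs_agree uC sC usi j' j'i.
apply/eqP; rewrite eq_sym; apply: contraLR sti' => ji.
by rewrite negbK (agree_s _ s'C _ ji) (agree_s _ t'C _ ji).
Qed.

Lemma good_axial_unsplit {c i} :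
  ~~ split_axis c i -> good_axial c i true || good_axial c i false.
Proof.
apply: contraR; rewrite negb_or => /andP [/forallPn [s] /= sF /forallPn [t] /= tF].
rewrite negb_imply negbK in sF; rewrite negb_imply negbK in tF.
apply/existsP; exists s; apply/existsP; exists t.
by case/andP: sF => -> /eqP ->; case/andP: tF => -> /eqP ->.
Qed.

Lemma card_good_axial c :
  (n - 1 <= #|[pred p : 'I_n * bool | good_axial c p.1 p.2]|)%N.
Proof.
have split_le1 : (#|[pred i | split_axis c i]| <= 1)%N.
  by apply/card_le1_eqP => i j; rewrite !inE => si sj; exact: split_axis_uniq sj si.
have unsplit_ge : (n - 1 <= #|[predC [pred i | split_axis c i]]|)%N.
  rewrite leq_subLR -[n in (n <= _)%N](card_ord n).
  by rewrite -(cardC [pred i | split_axis c i]) leq_add2r.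
apply: (leq_trans unsplit_ge).
rewrite -(card_image (f := fun i => (i, good_axial c i true))); last by move=> i j [].
apply: subset_leq_card; apply/subsetP => _ /imageP [i unsplit ->].
rewrite !inE /= in unsplit *.
by case: (boolP (good_axial c i true)) (good_axial_unsplit unsplit).
Qed.

Lemma card_good_label c : #|[pred l : label n | good_label c l]| =
  (#|[pred s | good_quarter c s]| + #|[pred p : 'I_n * bool | good_axial c p.1 p.2]|)%N.
Proof.
rewrite -!sum1_card big_sumType /=.
by congr addn; apply: eq_bigl => [[i b]]; rewrite !inE.
Qed.

Local Open Scope fset_scope.

Lemma card_closed_nbhd_ge :
  (#|` C| * (3 * 2 ^ (n - 2) + (n - 1)) <= #|` closed_nbhd C|)%N.
Proof.
apply: (@leq_mul_card_labelled _ _ C _ good_label (fun c x => c + nbr_offset x)%R).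
- by move=> c _; rewrite card_good_label leq_add ?card_good_quarter ?card_good_axial.
- by move=> c l cC _; apply: mem_closed_nbhd => //; exact: nbr_offset_in_halfVP.
- exact: good_label_inj.
Qed.
End Clique.

Theorem lemma16 (n : nat) (C : {fset 'rV[rat]_n}) :
  (4 <= n)%N -> clique C ->
  delta0 C <= 1 / ((3 / 4) * 2 ^+ n + n%:R - 1).
Proof.
move=> n_ge4 cliqueC; have n_gt2 : (2 < n)%N by apply: leq_trans n_ge4.
have -> : (3 / 4) * 2 ^+ n + n%:R - 1 = (3 * 2 ^ (n - 2) + (n - 1))%N%:R :> rat.
  rewrite natrD natrM natrX natrB ?(ltnW (ltnW n_gt2)) //.
  by rewrite -[X in 2 ^+ X](subnK (ltnW n_gt2)) exprD; lra.
apply: ler_div_inv; rewrite ?ler0n ?ltr0n ?addn_gt0 ?muln_gt0 ?expn_gt0 //.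
by rewrite -natrM ler_nat (card_closed_nbhd_ge C n_gt2 cliqueC).
Qed.
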